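(* For every $\mathcal{V}$-valued relation $d\colon X\times X\to\mathcal{V}$, $\alpha_X(\gamma_X(d))$ is the least $\mathcal{V}$-category on $X$ above $d$ (in the pointwise order $\sqsubseteq$), i.e. its metric closure.
   Context: $\mathcal{V}$ is a quantale: a complete lattice $(\mathcal{V},\sqsubseteq)$ with a commutative monoid structure $(\mathcal{V},\otimes,k)$ such that $\otimes$ preserves arbitrary joins in each argument; $d_\mathcal{V}(a,-)$ denotes the right adjoint of $a\otimes -$ (residuation). A $\mathcal{V}$-category on $X$ is $d\colon X\times X\to\mathcal{V}$ with $k\sqsubseteq d(x,x)$ and $d(x,y)\otimes d(y,z)\sqsubseteq d(x,z)$. Write $\bigwedge$ for meets in the order $\sqsubseteq$. For $S\subseteq\mathcal{V}^X$, $\alpha_X(S)(x_1,x_2)=\bigwedge_{p\in S} d_\mathcal{V}(p(x_1),p(x_2))$; $\gamma_X(d)=\{p\colon X\to\mathcal{V}\mid d(x_1,x_2)\sqsubseteq d_\mathcal{V}(p(x_1),p(x_2))\text{ for all }x_1,x_2\}$. *)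

(* A (unital, commutative) quantale: a complete lattice (V, qle) with
   arbitrary joins qsup, and a commutative monoid (qten, qk) such that
   qten preserves arbitrary joins in each argument (by commutativity it
   suffices to require it in the second argument). *)
Record quantale := Quantale {
  qT :> Type;
  qle : qT -> qT -> Prop;
  qle_refl : forall a, qle a a;
  qle_trans : forall a b c, qle a b -> qle b c -> qle a c;
  qle_antisym : forall a b, qle a b -> qle b a -> a = b;
  qsup : (qT -> Prop) -> qT;
  qsup_ub : forall (S : qT -> Prop) a, S a -> qle a (qsup S);
  qsup_least : forall (S : qT -> Prop) b, (forall a, S a -> qle a b) -> qle (qsup S) b;
  qten : qT -> qT -> qT;
  qk : qT;
  qtenA : forall a b c, qten a (qten b c) = qten (qten a b) c;
  qtenC : forall a b, qten a b = qten b a;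
  qten1 : forall a, qten qk a = a;
  qten_sup : forall a (S : qT -> Prop),
      qten a (qsup S) = qsup (fun y => exists x, S x /\ y = qten a x)
}.

Arguments qle {_}. Arguments qsup {_}. Arguments qten {_}. Arguments qk {_}.

Definition qinf {V : quantale} (S : V -> Prop) : V :=
  qsup (fun b => forall a, S a -> qle b a).

(* residuation: d_V(a, -) is the right adjoint of a (x) - *)
Definition dV {V : quantale} (a b : V) : V :=
  qsup (fun c => qle (qten a c) b).

Definition is_Vcat {V : quantale} {X : Type} (d : X -> X -> V) : Prop :=
  (forall x, qle qk (d x x)) /\
  (forall x y z, qle (qten (d x y) (d y z)) (d x z)).

Definition alphaX {V : quantale} {X : Type} (S : (X -> V) -> Prop) : X -> X -> V :=
  fun x1 x2 => qinf (fun v => exists p, S p /\ v = dV (p x1) (p x2)).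

Definition gammaX {V : quantale} {X : Type} (d : X -> X -> V) : (X -> V) -> Prop :=
  fun p => forall x1 x2, qle (d x1 x2) (dV (p x1) (p x2)).

Definition rel_le {V : quantale} {X : Type} (d e : X -> X -> V) : Prop :=
  forall x y, qle (d x y) (e x y).


(* Every alpha_X(S) is a V-category, because each d_V(p x1, p x2) is the
   pullback along p of the canonical V-category structure d_V on V, and
   meets of V-categories are V-categories. It lies above d exactly when
   S is contained in gamma_X(d). Conversely, for a V-category e above d
   the representables e(x, -) belong to gamma_X(d), and since k <= e(x, x)
   the component d_V(e(x, x), e(x, y)) of the meet is at most e(x, y). *)

Section QuantaleFacts.
Variable V : quantale.

Lemma qten_monor (a b c : V) : qle b c -> qle (qten a b) (qten a c).
Proof.
  intro Hbc.
  assert (Esup : qsup (fun y => y = b \/ y = c) = c).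
  { apply qle_antisym.
    - apply qsup_least. intros y [-> | ->]; [exact Hbc | apply qle_refl].
    - apply qsup_ub. now right. }
  rewrite <- Esup, qten_sup. apply qsup_ub. now exists b; split; [left|].
Qed.

Lemma qten_monol (a b c : V) : qle b c -> qle (qten b a) (qten c a).
Proof. intro Hbc. rewrite (qtenC _ b), (qtenC _ c). now apply qten_monor. Qed.

Lemma qten_mono (a b c d : V) : qle a b -> qle c d -> qle (qten a c) (qten b d).
Proof.
  intros Hab Hcd. apply qle_trans with (qten b c).
  - now apply qten_monol.
  - now apply qten_monor.
Qed.

Lemma dV_adj (a b c : V) : qle (qten a c) b <-> qle c (dV a b).
Proof.
  split; intro H.
  - now apply qsup_ub.
  - apply qle_trans with (qten a (dV a b)); [now apply qten_monor|].
    unfold dV. rewrite qten_sup. apply qsup_least. now intros y [x [Hx ->]].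
Qed.

Lemma qten_dV (a b : V) : qle (qten a (dV a b)) b.
Proof. apply dV_adj, qle_refl. Qed.

Lemma dV_refl (a : V) : qle qk (dV a a).
Proof. apply dV_adj. rewrite qtenC, qten1. apply qle_refl. Qed.

Lemma dV_trans (a b c : V) : qle (qten (dV a b) (dV b c)) (dV a c).
Proof.
  apply -> dV_adj. rewrite qtenA.
  apply qle_trans with (qten b (dV b c)); [|apply qten_dV].
  apply qten_monol, qten_dV.
Qed.

Lemma dV_le_unit (a b : V) : qle qk a -> qle (dV a b) b.
Proof.
  intro Hka. rewrite <- (qten1 _ (dV a b)).
  apply qle_trans with (qten a (dV a b)); [now apply qten_monol | apply qten_dV].
Qed.

Lemma qinf_lb (S : V -> Prop) (a : V) : S a -> qle (qinf S) a.
Proof. intro Sa. apply qsup_least. intros b Hb. now apply Hb. Qed.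

Lemma qinf_glb (S : V -> Prop) (b : V) : (forall a, S a -> qle b a) -> qle b (qinf S).
Proof. intro H. now apply qsup_ub. Qed.

End QuantaleFacts.

Section AlphaGamma.
Variables (V : quantale) (X : Type).

Lemma alphaX_le_dV (S : (X -> V) -> Prop) (p : X -> V) (x1 x2 : X) :
  S p -> qle (alphaX S x1 x2) (dV (p x1) (p x2)).
Proof. intro Sp. apply qinf_lb. now exists p. Qed.

Lemma alphaX_Vcat (S : (X -> V) -> Prop) : is_Vcat (alphaX S).
Proof.
  split.
  - intro x. apply qinf_glb. intros a [p [_ ->]]. apply dV_refl.
  - intros x y z. apply qinf_glb. intros a [p [Sp ->]].
    eapply qle_trans; [|apply dV_trans].
    apply qten_mono; now apply alphaX_le_dV.
Qed.

Lemma le_alphaX (d : X -> X -> V) (S : (X -> V) -> Prop) :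
  (forall p, S p -> gammaX d p) -> rel_le d (alphaX S).
Proof. intros HS x y. apply qinf_glb. intros a [p [Sp ->]]. now apply HS. Qed.

Lemma gammaX_representable (d e : X -> X -> V) (x : X) :
  is_Vcat e -> rel_le d e -> gammaX d (e x).
Proof.
  intros [_ e_trans] Hde x1 x2. apply dV_adj.
  apply qle_trans with (qten (e x x1) (e x1 x2)); [|apply e_trans].
  now apply qten_monor.
Qed.

Lemma alphaX_le_Vcat (S : (X -> V) -> Prop) (e : X -> X -> V) :
  is_Vcat e -> (forall x, S (e x)) -> rel_le (alphaX S) e.
Proof.
  intros [e_refl _] Se x y.
  apply qle_trans with (dV (e x x) (e x y)).
  - now apply alphaX_le_dV.
  - now apply dV_le_unit.
Qed.

End AlphaGamma.

Theorem mainTheorem8 (V : quantale) (X : Type) (d : X -> X -> V) :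
  is_Vcat (alphaX (gammaX d)) /\
  rel_le d (alphaX (gammaX d)) /\
  (forall e : X -> X -> V, is_Vcat e -> rel_le d e -> rel_le (alphaX (gammaX d)) e).
Proof.
  split; [|split].
  - apply alphaX_Vcat.
  - now apply le_alphaX.
  - intros e He Hde. apply alphaX_le_Vcat; [exact He|].
    intro x. now apply gammaX_representable.
Qed.
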